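(* Let $D_n$ denote the diameter of $\mathcal{T}_n$. Then $D_0=0$ and, for every $n\ge 1$, $$D_n=\begin{cases}2D_{n-1}+1 & \text{if } n \text{ is odd},\\ 2D_{n-1} & \text{if } n \text{ is even}.\end{cases}$$
   Context: For $n\in\mathbb{N}$ let $G_n=\mathbb{Z}_{2^n}\times\mathbb{Z}_{2^n}$ (additive group), so $|G_n|=N=4^n$. Let $S^+=\{(-1,-1),(1,0),(0,1)\}$ and $S=S^+\cup(-S^+)=\{\pm(1,0),\pm(0,1),\pm(1,1)\}$. The undirected graph $\mathcal{T}_n$ (the undirected ''arrowhead'', equivalently the undirected ''diamond'') is the Cayley graph $\Gamma(G_n,S)$: its vertex set is $G_n$ and each vertex $u$ is adjacent to $u+s$ for every $s\in S$ (arithmetic modulo $2^n$ in each coordinate). The diameter of a graph is the maximum, over all pairs of vertices, of the length of a shortest path between them. ($\mathcal{T}_0$ is a single vertex.) *)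

From mathcomp Require Import all_boot.
Unset Printing Implicit Defensive.

(* Vertices of T_n: G_n = Z_{2^n} x Z_{2^n}, coordinates represented by
   ordinals 'I_(2^n) with arithmetic modulo 2^n (valid also for n = 0). *)
Definition vert (n : nat) : finType := ('I_(2 ^ n) * 'I_(2 ^ n))%type.

Definition incm (m x : nat) : nat := (x + 1) %% m.
Definition decm (m x : nat) : nat := (x + m - 1) %% m.

(* Cayley graph adjacency: v = u + s with s in S = {±(1,0), ±(0,1), ±(1,1)} *)
Definition adj (n : nat) : rel (vert n) := fun u v =>
  let m := 2 ^ n in
  let x := val u.1 in let y := val u.2 in
  let x' := val v.1 in let y' := val v.2 in
  [|| (x' == incm m x) && (y' == y),
      (x' == decm m x) && (y' == y),
      (x' == x) && (y' == incm m y),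
      (x' == x) && (y' == decm m y),
      (x' == incm m x) && (y' == incm m y)
    | (x' == decm m x) && (y' == decm m y)].

Definition reach (n k : nat) (u v : vert n) : bool :=
  [exists p : k.-tuple (vert n), path (adj n) u p && (last u p == v)].

(* graph distance: least k with a walk of length k from u to v
   (the graph is connected, so some k < #|vert n| works) *)
Definition dist (n : nat) (u v : vert n) : nat :=
  find (fun k => reach n k u v) (iota 0 #|vert n|).

Definition diam (n : nat) : nat :=
  \max_(uv : vert n * vert n) dist n uv.1 uv.2.

From mathcomp Require Import all_boot.
From mathcomp Require Import zify.

(* The diameter is floor(2m/3) with m = 2^n, and the recurrence follows
   because 2^n is 2 or 1 mod 3 according to the parity of n.
   Upper bound: a displacement (a, b) with a <= b is covered by one of three
   two-run paths, of lengths b, m - a and a + m - b, and the least of them is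
   at most floor(2m/3); the case b < a follows by swapping coordinates.
   Lower bound: the hexagonal norm (max(|a|, |b|) when a and b have the same
   sign, |a| + |b| otherwise), minimised over the translates (a, b), (a - m, b - m),
   (a, b - m), (a - m, b), grows by at most one along an edge and equals
   floor(2m/3) at (floor(2m/3), m - floor(2m/3)). *)

Lemma expn2_gt0 n : 0 < 2 ^ n.
Proof. by rewrite expn_gt0. Qed.

Definition vert_of n (x y : nat) : vert n :=
  (Ordinal (ltn_pmod x (expn2_gt0 n)), Ordinal (ltn_pmod y (expn2_gt0 n))).

Lemma vert_of_mod {n x y x' y'} :
  x = x' %[mod 2 ^ n] -> y = y' %[mod 2 ^ n] -> vert_of n x y = vert_of n x' y'.
Proof. by move=> ex ey; congr pair; apply: val_inj. Qed.

Lemma vert_ofK n (u : vert n) : vert_of n u.1 u.2 = u.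
Proof. by case: u => a b; congr pair; apply: val_inj; apply: modn_small. Qed.

Lemma incm_mod m x : incm m (x %% m) = (x + 1) %% m.
Proof. by rewrite /incm modnDml. Qed.

Lemma decm_mod m x : 0 < m -> decm m (x %% m) = (x + (m - 1)) %% m.
Proof. by move=> m_gt0; rewrite /decm -addnBA // modnDml. Qed.

Definition moves m :=
  [:: (1, 0); (m - 1, 0); (0, 1); (0, m - 1); (1, 1); (m - 1, m - 1)].

Lemma adj_move {n} x y {s1 s2} : (s1, s2) \in moves (2 ^ n) ->
  adj n (vert_of n x y) (vert_of n (x + s1) (y + s2)).
Proof.
rewrite !inE => /or4P[| | |/or3P[| |]] /eqP[-> ->];
  by rewrite /adj /= !incm_mod !(decm_mod _ _ (expn2_gt0 n)) ?addn0 !eqxx ?orbT.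
Qed.

Lemma reach_refl {n} (u : vert n) : reach n 0 u u.
Proof. by apply/existsP; exists [tuple]; rewrite /= eqxx. Qed.

Lemma reach_rcons n k (u w v : vert n) :
  reach n k u w -> adj n w v -> reach n k.+1 u v.
Proof.
case/existsP=> p /andP[pth /eqP lst] wv.
have sz : size (rcons p v) == k.+1 by rewrite size_rcons size_tuple.
by apply/existsP; exists (Tuple sz); rewrite /= rcons_path pth lst wv last_rcons eqxx.
Qed.

Lemma reach_run {n k u x y s} i : s \in moves (2 ^ n) -> reach n k u (vert_of n x y) ->
  reach n (k + i) u (vert_of n (x + i * s.1) (y + i * s.2)).
Proof.
case: s => s1 s2 s_move r; elim: i => [|i IH]; first by rewrite !mul0n !addn0.
by rewrite addnS !mulSnr !addnA; apply: reach_rcons IH (adj_move _ _ s_move).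
Qed.

Lemma reach_two_runs {n} x y s t i j : s \in moves (2 ^ n) -> t \in moves (2 ^ n) ->
  reach n (i + j) (vert_of n x y)
    (vert_of n (x + i * s.1 + j * t.1) (y + i * s.2 + j * t.2)).
Proof.
move=> s_move t_move.
by have := reach_run j t_move (reach_run i s_move (reach_refl (vert_of n x y))).
Qed.

Definition swapv {n} (u : vert n) : vert n := (u.2, u.1).

Lemma adj_swap n (u v : vert n) : adj n u v -> adj n (swapv u) (swapv v).
Proof.
by rewrite /adj /= => /or4P[| | |/or3P[| |]] /andP[-> ->]; rewrite ?orbT.
Qed.

Lemma reach_swap n k (u v : vert n) : reach n k u v -> reach n k (swapv u) (swapv v).
Proof.
case/existsP=> p /andP[pth /eqP lst]; apply/existsP; exists (map_tuple swapv p).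
rewrite /= path_map last_map lst eqxx andbT.
by apply: sub_path pth => a b; apply: adj_swap.
Qed.

Lemma reach_mod n k u x y x' y' : reach n k u (vert_of n x y) ->
  x = x' %[mod 2 ^ n] -> y = y' %[mod 2 ^ n] -> reach n k u (vert_of n x' y').
Proof. by move=> r ex ey; rewrite -(vert_of_mod ex ey). Qed.

Lemma mul_subn1_mod m z a : a <= m -> z + a * (m - 1) = z + (m - a) %[mod m].
Proof.
move=> le_am; apply/eqP; rewrite -(eqn_modDr a) -!addnA subnK //.
have -> : a * (m - 1) + a = a * m by nia.
by rewrite addnC modnMDl modnDr.
Qed.

Definition two_thirds m := m.*2 %/ 3.

Lemma reach_displacement {n} x y {a b} : a < 2 ^ n -> b < 2 ^ n ->
  exists2 k, k <= two_thirds (2 ^ n) &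
    reach n k (vert_of n x y) (vert_of n (x + a) (y + b)).
Proof.
wlog le_ab : x y a b / a <= b => [hyp a_lt b_lt|].
  case: (leqP a b) => [le_ab | /ltnW le_ba]; first exact: hyp.
  have [k k_le r] := hyp y x b a le_ba b_lt a_lt.
  by exists k => //; apply: reach_swap r.
rewrite /two_thirds; set m := 2 ^ n => a_lt b_lt.
have [le_bK | lt_Kb] := leqP b (m.*2 %/ 3).
  exists (a + (b - a)); first lia.
  apply: reach_mod (reach_two_runs x y (1, 1) (0, 1) a (b - a) _ _) _ _;
    rewrite /= ?inE ?eqxx ?orbT //; congr modn; lia.
have [le_aK | lt_Ka] := leqP (m - a) (m.*2 %/ 3).
  exists ((m - b) + (b - a)); first lia.
  apply: reach_mod
      (reach_two_runs x y (m - 1, m - 1) (m - 1, 0) (m - b) (b - a) _ _) _ _;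
    rewrite /= ?inE ?eqxx ?orbT // ?muln0 ?addn0 -?addnA -?mulnDl mul_subn1_mod;
    try lia; congr modn; lia.
exists (a + (m - b)); first lia.
apply: reach_mod (reach_two_runs x y (1, 0) (0, m - 1) a (m - b) _ _) _ _;
  rewrite /= ?inE ?eqxx ?orbT // ?muln0 ?addn0 ?mul_subn1_mod; try lia; congr modn; lia.
Qed.

Lemma card_vert n : #|vert n| = 2 ^ n * 2 ^ n.
Proof. by rewrite card_prod card_ord. Qed.

Lemma dist_le {n k} {u v : vert n} :
  reach n k u v -> k < #|vert n| -> dist n u v <= k.
Proof.
move=> r k_lt; rewrite /dist leqNgt; apply/negP=> lt_k_find.
by have := before_find 0 lt_k_find; rewrite nth_iota // add0n r.
Qed.

Lemma dist_ge n k (u v : vert n) :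
  (forall j, reach n j u v -> k <= j) -> k <= #|vert n| -> k <= dist n u v.
Proof.
move=> reach_ge k_le; rewrite /dist.
have [has_reach | no_reach] := boolP (has (fun j => reach n j u v) (iota 0 #|vert n|)).
  move: (has_reach); rewrite has_find size_iota => find_lt.
  by apply: reach_ge; have := nth_find 0 has_reach; rewrite nth_iota // add0n.
by rewrite (hasNfind no_reach) size_iota.
Qed.

Lemma addn_diff_mod m x x' : x <= m -> x + (x' + m - x) %% m = x' %[mod m].
Proof.
by move=> le_xm; rewrite modnDmr (_ : x + (x' + m - x) = x' + m) ?modnDr //; lia.
Qed.

Lemma dist_le_two_thirds n (u v : vert n) : dist n u v <= two_thirds (2 ^ n).
Proof.
have m_gt0 := expn2_gt0 n.
have [k k_le r] := reach_displacement u.1 u.2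
  (ltn_pmod (v.1 + 2 ^ n - u.1) m_gt0) (ltn_pmod (v.2 + 2 ^ n - u.2) m_gt0).
rewrite vert_ofK (vert_of_mod (addn_diff_mod _ _ _ (ltnW (ltn_ord _)))
  (addn_diff_mod _ _ _ (ltnW (ltn_ord _)))) vert_ofK in r.
have k_lt : k < #|vert n|.
  have : 2 ^ n <= 2 ^ n * 2 ^ n by rewrite leq_pmulr.
  rewrite card_vert /two_thirds in k_le *; lia.
exact: leq_trans (dist_le r k_lt) k_le.
Qed.

Definition torus_norm m x y :=
  minn (minn (maxn x y) (m - minn x y)) (minn (x + m - y) (y + m - x)).

Lemma leq_minS p a b : (p <= (minn a b).+1) = (p <= a.+1) && (p <= b.+1).
Proof. by rewrite -leq_min -addn1 -[a.+1]addn1 -[b.+1]addn1 addn_minl. Qed.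

Lemma incm_cases {m x x'} : x < m -> x' = incm m x ->
  (x' = x.+1 /\ x.+1 < m) \/ (x' = 0 /\ x.+1 = m).
Proof.
rewrite /incm addn1 => lt_xm ->; case: (ltngtP x.+1 m) => [lt_Sx_m | lt_m_Sx | <-].
- by left; rewrite modn_small.
- lia.
- by right; rewrite modnn.
Qed.

Lemma decm_cases {m x x'} : x < m -> x' = decm m x ->
  (x' = x.-1 /\ 0 < x) \/ (x' = m - 1 /\ x = 0).
Proof.
rewrite /decm => lt_xm ->; case: x lt_xm => [|x] lt_xm.
  by right; rewrite add0n modn_small //; lia.
by left; rewrite (_ : x.+1 + m - 1 = x + m) ?modnDr ?modn_small //; lia.
Qed.

Lemma torus_norm_adj n (u v : vert n) : adj n u v ->
  torus_norm (2 ^ n) v.1 v.2 <= (torus_norm (2 ^ n) u.1 u.2).+1.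
Proof.
move: (ltn_ord u.1) (ltn_ord u.2); rewrite /adj /torus_norm /=.
move: (nat_of_ord u.1) (nat_of_ord u.2) (nat_of_ord v.1) (nat_of_ord v.2) => x y x' y'.
move: (2 ^ n) => m x_lt y_lt.
case/or4P=> [| | |/or3P[| |]] /andP[/eqP ex /eqP ey];
  [ rewrite ey; case: (incm_cases x_lt ex) => [[-> ?]|[-> ?]]
  | rewrite ey; case: (decm_cases x_lt ex) => [[-> ?]|[-> ?]]
  | rewrite ex; case: (incm_cases y_lt ey) => [[-> ?]|[-> ?]]
  | rewrite ex; case: (decm_cases y_lt ey) => [[-> ?]|[-> ?]]
  | case: (incm_cases x_lt ex) => [[-> ?]|[-> ?]];
    case: (incm_cases y_lt ey) => [[-> ?]|[-> ?]]
  | case: (decm_cases x_lt ex) => [[-> ?]|[-> ?]];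
    case: (decm_cases y_lt ey) => [[-> ?]|[-> ?]] ].
all: rewrite !leq_minS !geq_min; repeat (apply/andP; split); lia.
Qed.

Lemma torus_norm_path {n} {u : vert n} {s} : path (adj n) u s ->
  torus_norm (2 ^ n) (last u s).1 (last u s).2 <= torus_norm (2 ^ n) u.1 u.2 + size s.
Proof.
elim: s u => [|w s IH] u /=; first by rewrite addn0.
case/andP=> uw ws; apply: leq_trans (IH _ ws) _.
by rewrite addnS -addSn leq_add2r torus_norm_adj.
Qed.

Lemma torus_norm_reach n k (u v : vert n) : reach n k u v ->
  torus_norm (2 ^ n) v.1 v.2 <= torus_norm (2 ^ n) u.1 u.2 + k.
Proof.
case/existsP=> p /andP[pth /eqP <-].
by have := torus_norm_path pth; rewrite size_tuple.
Qed.

Lemma diamE n : diam n = two_thirds (2 ^ n).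
Proof.
apply/eqP; rewrite eqn_leq; apply/andP; split.
  by apply/bigmax_leqP=> uv _; apply: dist_le_two_thirds.
case: n => [|n] //; set m := 2 ^ n.+1.
have m_ge2 : 2 <= m by rewrite /m expnS leq_pmulr ?expn2_gt0.
have K_lt : two_thirds m < m by rewrite /two_thirds; lia.
pose u := vert_of n.+1 0 0.
pose v := vert_of n.+1 (two_thirds m) (m - two_thirds m).
apply: leq_trans (leq_bigmax (u, v)); apply: dist_ge => /=.
  move=> j /torus_norm_reach; rewrite /= !mod0n !modn_small /torus_norm /two_thirds; lia.
by rewrite card_vert (leq_trans (ltnW K_lt)) // leq_pmulr ?expn2_gt0.
Qed.

Lemma expn2_mod3 n : 2 ^ n %% 3 = (if odd n then 2 else 1).
Proof. by elim: n => [|n IH] //; rewrite expnS -modnMmr IH /=; case: (odd n). Qed.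

Theorem lemma1 :
  diam 0 = 0 /\
  (forall n : nat, 1 <= n ->
     diam n = (if odd n then (diam n.-1).*2.+1 else (diam n.-1).*2)).
Proof.
split; first by rewrite diamE.
case=> [|n] // _; rewrite !diamE /= /two_thirds expnS.
by have := expn2_mod3 n; case: (odd n) => /=; lia.
Qed.
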